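(* Let $A_1A_2A_3A_4$ be a (non-degenerate) tetrahedron in $\mathbb{R}^3$ with $A_1A_4+A_2A_3>A_1A_2+A_3A_4$. Let $F$ be a minimizer of $X\mapsto |A_1X|+|A_2X|+|A_3X|+|A_4X|$ lying in the interior of the tetrahedron, and let $T_{12}$, $T_{34}$ be the points where the line through $F$ meeting both lines $A_1A_2$ and $A_3A_4$ intersects these lines. Let $A_1''\in$ line $A_1A_2$, $A_4''\in$ line $A_3A_4$ be the endpoints of the common perpendicular of the two (skew) lines, $H=|A_1''A_4''|$, and assume $A_1''\notin[A_1,A_2]$ with $A_1$ between $A_1''$ and $A_2$, and $A_4''\notin[A_4,A_3]$ with $A_4$ between $A_4''$ and $A_3$. Let $\varphi$ be the angle between $\overrightarrow{A_1A_2}$ and $\overrightarrow{A_4A_3}$, $a_{12}=|A_1A_2|$, $a_{34}=|A_3A_4|$, $M_{12},M_{34}$ the midpoints of $A_1A_2$, $A_3A_4$, and put $t_{12}=|A_1''T_{12}|$, $t_{34}=|A_4''T_{34}|$, $k_1=|A_1''A_1|$, $k_2=|A_4''A_4|$, $m_{12}=|A_1''M_{12}|$, $m_{34}=|A_4''M_{34}|$, $\theta=\angle A_4FA_3$. Then $$\frac{t_{34}-t_{12}\cos\varphi}{\sqrt{H^2+t_{12}^2\sin^2\varphi}}=\frac{m_{34}-t_{34}}{\frac{a_{34}}{2}\tan\frac{\theta}{2}},\qquad \frac{t_{12}-t_{34}\cos\varphi}{\sqrt{H^2+t_{34}^2\sin^2\varphi}}=\frac{m_{12}-t_{12}}{\frac{a_{12}}{2}\tan\frac{\theta}{2}},$$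 and $$\cot\frac{\theta}{2}=\frac{H^2+k_1(t_{12}-t_{34}\cos\varphi)+k_2(t_{34}-t_{12}\cos\varphi)}{(t_{12}-k_1)\sqrt{H^2+t_{34}^2\sin^2\varphi}+(t_{34}-k_2)\sqrt{H^2+t_{12}^2\sin^2\varphi}}.$$
   Context: $|XY|$ denotes Euclidean distance and $\angle XYZ\in[0,\pi]$ the angle at $Y$. $F$ is the (unweighted) Fermat–Torricelli point of the four vertices; the line $T_{12}T_{34}$ through $F$ is called its Simpson line. *)

From Stdlib Require Import Reals Lra.
From Stdlib Require Export Reals.
Open Scope R_scope.

Definition pt := (R * R * R)%type.

Definition px (p : pt) : R := fst (fst p).
Definition py (p : pt) : R := snd (fst p).
Definition pz (p : pt) : R := snd p.

Definition mkpt (x y z : R) : pt := (x, y, z).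

Definition vadd (p q : pt) : pt := mkpt (px p + px q) (py p + py q) (pz p + pz q).
Definition vsub (p q : pt) : pt := mkpt (px p - px q) (py p - py q) (pz p - pz q).
Definition vscale (a : R) (p : pt) : pt := mkpt (a * px p) (a * py p) (a * pz p).

Definition dot (p q : pt) : R := px p * px q + py p * py q + pz p * pz q.
Definition vnorm (p : pt) : R := sqrt (dot p p).

Definition edist (X Y : pt) : R := vnorm (vsub X Y).

Definition vangle (u v : pt) : R := acos (dot u v / (vnorm u * vnorm v)).

Definition angle (X Y Z : pt) : R := vangle (vsub X Y) (vsub Z Y).

Definition lerp (P Q : pt) (s : R) : pt := vadd P (vscale s (vsub Q P)).

Definition midpoint (P Q : pt) : pt := lerp P Q (1/2).

Definition on_line (X P Q : pt) : Prop := exists s : R, X = lerp P Q s.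

Definition det3 (u v w : pt) : R :=
  px u * (py v * pz w - pz v * py w)
  - py u * (px v * pz w - pz v * px w)
  + pz u * (px v * py w - py v * px w).

Definition nondegenerate_tetra (A1 A2 A3 A4 : pt) : Prop :=
  det3 (vsub A2 A1) (vsub A3 A1) (vsub A4 A1) <> 0.

Definition in_tetra_interior (A1 A2 A3 A4 X : pt) : Prop :=
  exists l1 l2 l3 l4 : R,
    0 < l1 /\ 0 < l2 /\ 0 < l3 /\ 0 < l4 /\ l1 + l2 + l3 + l4 = 1 /\
    X = vadd (vadd (vscale l1 A1) (vscale l2 A2)) (vadd (vscale l3 A3) (vscale l4 A4)).

Definition sumdist (A1 A2 A3 A4 X : pt) : R :=
  edist A1 X + edist A2 X + edist A3 X + edist A4 X.

Definition is_FT_point (A1 A2 A3 A4 F : pt) : Prop :=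
  forall X : pt, sumdist A1 A2 A3 A4 F <= sumdist A1 A2 A3 A4 X.

Definition strictly_between (A B C : pt) : Prop :=
  exists s : R, 0 < s < 1 /\ B = lerp A C s.

(* At the Fermat-Torricelli point F the unit vectors (A_i - F)/|A_iF| sum to zero.  Writing
   F = (1 - l) T12 + l T34 and splitting this sum along the independent directions A1A2, A3A4
   and T12T34 shows that FT12 bisects the angle A1FA2, that FT34 bisects A3FA4, and that
   l (1/|A1F| + 1/|A2F|) = (1 - l) (1/|A3F| + 1/|A4F|); the last relation makes the two
   angles equal.  In a triangle FAB whose bisector from F meets AB at T, the cotangent of the
   half angle at F is a rational function of the distance from F to AB and of the positions
   of A, B, T relative to the foot of that perpendicular.  Applied to both triangles, with all
   positions measured from the common perpendicular A1''A4'', this gives the three formulas. *)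

From Stdlib Require Import Reals Lra.
From Coquelicot Require Import Coquelicot.
Open Scope R_scope.

Definition cross (u v : pt) : pt :=
  mkpt (py u * pz v - pz u * py v) (pz u * px v - px u * pz v) (px u * py v - py u * px v).

Lemma pt_ext (p q : pt) : px p = px q -> py p = py q -> pz p = pz q -> p = q.
Proof. destruct p as [[x y] z], q as [[x' y'] z']; cbn; intros -> -> ->; reflexivity. Qed.

Ltac vec_unfold := cbv [lerp midpoint vadd vsub vscale mkpt dot det3 cross px py pz fst snd].
Ltac vec_field := apply pt_ext; vec_unfold; field.

Lemma det3_indep (u v w : pt) (a b c : R) :
  det3 u v w <> 0 ->
  (forall e, a * dot u e + b * dot v e + c * dot w e = 0) -> a = 0 /\ b = 0 /\ c = 0.
Proof.
  intros Hdet Hsum.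
  assert (Ha : a * det3 u v w = 0) by (rewrite <- (Hsum (cross v w)); vec_unfold; ring).
  assert (Hb : b * det3 u v w = 0) by (rewrite <- (Hsum (cross w u)); vec_unfold; ring).
  assert (Hc : c * det3 u v w = 0) by (rewrite <- (Hsum (cross u v)); vec_unfold; ring).
  apply Rmult_integral in Ha, Hb, Hc. intuition.
Qed.

Lemma det3_sq_perp (u v n : pt) :
  dot n u = 0 -> dot n v = 0 -> det3 u v n ^ 2 = dot n n * (dot u u * dot v v - dot u v ^ 2).
Proof.
  intros Hu Hv.
  transitivity (dot n n * (dot u u * dot v v - dot u v ^ 2)
                - dot n u ^ 2 * dot v v - dot n v ^ 2 * dot u u + 2 * dot u v * dot n u * dot n v).
  - vec_unfold; ring.
  - rewrite Hu, Hv; ring.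
Qed.

Lemma dot_nonneg (u : pt) : 0 <= dot u u.
Proof. vec_unfold; nra. Qed.

Lemma vnorm_sq (u : pt) : vnorm u ^ 2 = dot u u.
Proof. apply pow2_sqrt, dot_nonneg. Qed.

Lemma vnorm_scale (a : R) (u : pt) : vnorm (vscale a u) = Rabs a * vnorm u.
Proof.
  unfold vnorm.
  replace (dot (vscale a u) (vscale a u)) with (Rsqr a * dot u u)
    by (unfold Rsqr; vec_unfold; ring).
  rewrite sqrt_mult_alt by apply Rle_0_sqr.
  now rewrite sqrt_Rsqr_abs.
Qed.

Lemma edist_sym (X Y : pt) : edist X Y = edist Y X.
Proof.
  unfold edist.
  replace (vsub X Y) with (vscale (-1) (vsub Y X)) by vec_field.
  rewrite vnorm_scale, Rabs_left by lra; ring.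
Qed.

Lemma edist_pos (X Y : pt) : X <> Y -> 0 < edist X Y.
Proof.
  intros Hne. apply sqrt_lt_R0.
  destruct (Rle_lt_or_eq_dec _ _ (dot_nonneg (vsub X Y))) as [Hlt | Heq]; [exact Hlt |].
  exfalso; apply Hne.
  revert Heq; destruct X as [[x1 x2] x3], Y as [[y1 y2] y3]; vec_unfold; intros Heq.
  pose proof (Rle_0_sqr (x1 - y1)); pose proof (Rle_0_sqr (x2 - y2));
    pose proof (Rle_0_sqr (x3 - y3)).
  assert (E1 : x1 - y1 = 0) by (apply Rsqr_eq_0; unfold Rsqr in *; lra).
  assert (E2 : x2 - y2 = 0) by (apply Rsqr_eq_0; unfold Rsqr in *; lra).
  assert (E3 : x3 - y3 = 0) by (apply Rsqr_eq_0; unfold Rsqr in *; lra).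
  apply pt_ext; cbn; lra.
Qed.

Lemma edist_lerp_l (P Q : pt) (a : R) : edist P (lerp P Q a) = Rabs a * edist Q P.
Proof.
  unfold edist.
  replace (vsub P (lerp P Q a)) with (vscale (- a) (vsub Q P)) by vec_field.
  now rewrite vnorm_scale, Rabs_Ropp.
Qed.

Lemma edist_lerp_r (P Q : pt) (a : R) : edist (lerp P Q a) Q = Rabs (1 - a) * edist Q P.
Proof.
  unfold edist.
  replace (vsub (lerp P Q a) Q) with (vscale (- (1 - a)) (vsub Q P)) by vec_field.
  now rewrite vnorm_scale, Rabs_Ropp.
Qed.

Lemma lerp_lerp_r (P Q : pt) (a t : R) : lerp (lerp P Q a) Q t = lerp P Q (a + t * (1 - a)).
Proof. vec_field. Qed.

Lemma lerp_l_lerp (P Q : pt) (a t : R) : lerp Q (lerp P Q a) t = lerp P Q (1 + t * (a - 1)).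
Proof. vec_field. Qed.

Lemma midpoint_lerp_r (P Q : pt) (a : R) : midpoint (lerp P Q a) Q = lerp P Q ((1 + a) / 2).
Proof. vec_field. Qed.

Lemma midpoint_lerp_l (P Q : pt) (a : R) : midpoint Q (lerp P Q a) = lerp P Q ((1 + a) / 2).
Proof. vec_field. Qed.

Lemma vangle_scale (a b : R) (u v : pt) :
  0 < a -> 0 < b -> 0 < vnorm u -> 0 < vnorm v -> vangle (vscale a u) (vscale b v) = vangle u v.
Proof.
  intros Ha Hb Hu Hv. unfold vangle.
  rewrite !vnorm_scale, !Rabs_pos_eq by lra.
  f_equal.
  replace (dot (vscale a u) (vscale b v)) with (a * b * dot u v) by (vec_unfold; ring).
  field; lra.
Qed.

Lemma sin_acos_sq (q : R) : -1 <= q <= 1 -> sin (acos q) ^ 2 = 1 - q ^ 2.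
Proof.
  intros Hq. rewrite sin_acos by exact Hq.
  rewrite pow2_sqrt; unfold Rsqr; nra.
Qed.

Lemma half_acos_pos (q : R) : -1 < q < 1 -> 0 < sin (acos q / 2) /\ 0 < cos (acos q / 2).
Proof.
  intros Hq. pose proof (acos_bound_lt q Hq). pose proof PI_RGT_0.
  split; [apply sin_gt_0 | apply cos_gt_0]; lra.
Qed.

Lemma cot_half_acos (q : R) : -1 < q < 1 ->
  cos (acos q / 2) / sin (acos q / 2) = (1 + q) / sqrt (1 - q ^ 2).
Proof.
  intros Hq. destruct (half_acos_pos q Hq) as [Hs Hc].
  set (h := acos q / 2) in *.
  assert (Hh : acos q = 2 * h) by (unfold h; field).
  assert (Hcos : q = 2 * cos h * cos h - 1) by (rewrite <- cos_2a_cos, <- Hh, cos_acos; lra).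
  assert (Hsin : sqrt (1 - q ^ 2) = 2 * sin h * cos h).
  { rewrite <- sin_2a, <- Hh, sin_acos by lra. unfold Rsqr. f_equal. ring. }
  rewrite Hsin, Hcos. field. lra.
Qed.

Lemma is_derive_min_eq0 (f : R -> R) (a l : R) :
  (forall h, f a <= f h) -> is_derive f a l -> l = 0.
Proof.
  intros Hmin Hd. apply is_derive_Reals in Hd.
  pose (pr := exist (fun l' => derivable_pt_lim f a l') l Hd : derivable_pt f a).
  change l with (derive_pt f a pr).
  apply (deriv_minimum f (a - 1) (a + 1) a pr); [lra | lra | intros; apply Hmin].
Qed.

Lemma is_derive_edist_shift (A F e : pt) :
  A <> F ->
  is_derive (fun h => edist A (vadd F (vscale h e))) 0 (- dot (vsub A F) e / edist A F).
Proof.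
  intros Hne. pose proof (edist_pos A F Hne) as Hpos.
  apply is_derive_ext with
    (f := fun h => sqrt (dot (vsub A F) (vsub A F) - 2 * h * dot (vsub A F) e + h ^ 2 * dot e e)).
  { intros h. unfold edist, vnorm. f_equal. vec_unfold. ring. }
  unfold edist, vnorm in *.
  assert (Hw : 0 < dot (vsub A F) (vsub A F)).
  { apply Rnot_le_lt; intros Hle. rewrite sqrt_neg_0 in Hpos by exact Hle. lra. }
  auto_derive; replace (_ + _ + _) with (dot (vsub A F) (vsub A F)) by ring.
  - exact Hw.
  - field. lra.
Qed.

Lemma FT_point_balance (A1 A2 A3 A4 F e : pt) :
  is_FT_point A1 A2 A3 A4 F -> A1 <> F -> A2 <> F -> A3 <> F -> A4 <> F ->
  dot (vsub A1 F) e / edist A1 F + dot (vsub A2 F) e / edist A2 F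
  + dot (vsub A3 F) e / edist A3 F + dot (vsub A4 F) e / edist A4 F = 0.
Proof.
  intros HFT H1 H2 H3 H4.
  set (f := fun h => sumdist A1 A2 A3 A4 (vadd F (vscale h e))).
  assert (Hmin : forall h, f 0 <= f h).
  { intros h. unfold f. replace (vadd F (vscale 0 e)) with F by vec_field. apply HFT. }
  assert (Hd := is_derive_plus _ _ _ _ _
                 (is_derive_plus _ _ _ _ _
                    (is_derive_plus _ _ _ _ _ (is_derive_edist_shift A1 F e H1)
                                              (is_derive_edist_shift A2 F e H2))
                    (is_derive_edist_shift A3 F e H3))
                 (is_derive_edist_shift A4 F e H4)).
  apply is_derive_min_eq0 in Hd; [| exact Hmin].
  unfold plus in Hd; simpl in Hd. lra.
Qed.

Lemma interior_vertex_ne (A1 A2 A3 A4 F : pt) :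
  nondegenerate_tetra A1 A2 A3 A4 -> in_tetra_interior A1 A2 A3 A4 F ->
  A1 <> F /\ A2 <> F /\ A3 <> F /\ A4 <> F.
Proof.
  unfold nondegenerate_tetra.
  intros Hnd (l1 & l2 & l3 & l4 & H1 & H2 & H3 & H4 & Hsum & HF).
  set (Dt := det3 (vsub A2 A1) (vsub A3 A1) (vsub A4 A1)) in Hnd.
  assert (E2 : det3 (vsub F A1) (vsub A3 A1) (vsub A4 A1) = l2 * Dt).
  { subst F Dt. replace l1 with (1 - l2 - l3 - l4) by lra. vec_unfold. ring. }
  assert (E3 : det3 (vsub A2 A1) (vsub F A1) (vsub A4 A1) = l3 * Dt).
  { subst F Dt. replace l1 with (1 - l2 - l3 - l4) by lra. vec_unfold. ring. }
  assert (Hl2 : l2 * Dt <> 0)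
    by (apply Rmult_integral_contrapositive_currified; [lra | exact Hnd]).
  assert (Hl3 : l3 * Dt <> 0)
    by (apply Rmult_integral_contrapositive_currified; [lra | exact Hnd]).
  repeat split; intros <-.
  - apply Hl2. rewrite <- E2. vec_unfold. ring.
  - apply Hl3. rewrite <- E3. vec_unfold. ring.
  - apply Hl2. rewrite <- E2. vec_unfold. ring.
  - apply Hl2. rewrite <- E2. vec_unfold. ring.
Qed.

Section AngleBisector.

(* The components of T - F along and across the line are x and y, and [bisector] is the
   signed form of |TA| : |TB| = |FA| : |FB|, i.e. FT bisects the angle AFB. *)
Variables (F T A B e : pt) (qA qB y : R).

Let d := vsub T F.
Let x := dot d e.

Hypothesis e_unit : dot e e = 1.
Hypothesis A_on_line : vsub A T = vscale qA e.
Hypothesis B_on_line : vsub B T = vscale qB e.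
Hypothesis qB_lt_qA : qB < qA.
Hypothesis y_pos : 0 < y.
Hypothesis y_sq : y ^ 2 = dot d d - x ^ 2.
Hypothesis bisector : qA / edist A F + qB / edist B F = 0.

Let rA := edist A F.
Let rB := edist B F.
Let cos_AFB := dot (vsub B F) (vsub A F) / (rB * rA).
Let K := cos (angle B F A / 2) / sin (angle B F A / 2).

Let dot_from_line (X Y : pt) (qX qY : R) :
  vsub X T = vscale qX e -> vsub Y T = vscale qY e ->
  dot (vsub X F) (vsub Y F) = (qX + x) * (qY + x) + y ^ 2.
Proof.
  intros HX HY.
  replace (vsub X F) with (vadd (vsub X T) d) by (unfold d; vec_field).
  replace (vsub Y F) with (vadd (vsub Y T) d) by (unfold d; vec_field).
  rewrite HX, HY, y_sq.
  transitivity (qX * qY * dot e e + (qX + qY) * x + dot d d); [unfold x; vec_unfold; ring |].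
  rewrite e_unit; ring.
Qed.

Let edist_from_line_sq (X : pt) (qX : R) :
  vsub X T = vscale qX e -> edist X F ^ 2 = (qX + x) ^ 2 + y ^ 2.
Proof. intros HX. unfold edist. rewrite vnorm_sq, (dot_from_line X X qX qX HX HX). ring. Qed.

Let edist_from_line_pos (X : pt) (qX : R) : vsub X T = vscale qX e -> 0 < edist X F.
Proof.
  intros HX. pose proof (edist_from_line_sq X qX HX) as Hsq.
  assert (Hnn : 0 <= edist X F) by apply sqrt_pos.
  assert (0 < (qX + x) ^ 2 + y ^ 2) by (pose proof (pow2_ge_0 (qX + x)); nra).
  destruct (Rle_lt_or_eq_dec _ _ Hnn) as [Hlt | Heq]; [exact Hlt |].
  rewrite <- Heq in Hsq. lra.
Qed.

Let rA_pos : 0 < rA := edist_from_line_pos A qA A_on_line.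
Let rB_pos : 0 < rB := edist_from_line_pos B qB B_on_line.

Let bisector_cross : qA * rB + qB * rA = 0.
Proof.
  transitivity (rA * rB * (qA / rA + qB / rB)); [field; lra |].
  fold rA rB in bisector; rewrite bisector; ring.
Qed.

Let bisector_feet_sign : qB < 0 < qA.
Proof. pose proof bisector_cross. split; nra. Qed.

Let rB_eq : rB = - qB * rA / qA.
Proof.
  destruct bisector_feet_sign.
  replace rB with (qA * rB / qA) by (field; lra).
  replace (qA * rB) with (- qB * rA) by (pose proof bisector_cross; lra).
  reflexivity.
Qed.

Let rA_sq : rA ^ 2 = (qA + x) ^ 2 + y ^ 2 := edist_from_line_sq A qA A_on_line.
Let rB_sq : rB ^ 2 = (qB + x) ^ 2 + y ^ 2 := edist_from_line_sq B qB B_on_line.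
Let dd_eq : dot d d = x ^ 2 + y ^ 2.
Proof. rewrite y_sq; ring. Qed.

Let bisector_sq_relation : 2 * qA * qB * x + (qA + qB) * dot d d = 0.
Proof.
  assert (Hfac : (qA - qB) * (2 * qA * qB * x + (qA + qB) * dot d d) = 0).
  { transitivity (qA ^ 2 * rB ^ 2 - qB ^ 2 * rA ^ 2).
    - rewrite rA_sq, rB_sq, dd_eq; ring.
    - replace (qA ^ 2 * rB ^ 2) with ((qA * rB) ^ 2) by ring.
      replace (qA * rB) with (- (qB * rA)) by (pose proof bisector_cross; lra).
      ring. }
  apply Rmult_integral in Hfac; destruct Hfac; [lra | assumption].
Qed.

Let dot_BA := (qB + x) * (qA + x) + y ^ 2.
Let cos_AFB_eq : cos_AFB = dot_BA / (rB * rA).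
Proof. unfold cos_AFB. now rewrite (dot_from_line B A qB qA B_on_line A_on_line). Qed.

Let bisector_sin_sq : 1 - cos_AFB ^ 2 = (y * (qA - qB) / (rA * rB)) ^ 2.
Proof.
  (* Lagrange's identity: both sides are the squared doubled area of FAB. *)
  assert (Hlag : (rA * rB) ^ 2 - dot_BA ^ 2 = (y * (qA - qB)) ^ 2).
  { replace ((rA * rB) ^ 2) with (rA ^ 2 * rB ^ 2) by ring.
    rewrite rA_sq, rB_sq. unfold dot_BA. ring. }
  rewrite cos_AFB_eq.
  transitivity (((rA * rB) ^ 2 - dot_BA ^ 2) / (rA * rB) ^ 2); [field; lra |].
  rewrite Hlag. field. lra.
Qed.

Let cos_AFB_range : -1 < cos_AFB < 1.
Proof.
  pose proof bisector_sin_sq as Hs.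
  assert (0 < y * (qA - qB) / (rA * rB)).
  { apply Rdiv_lt_0_compat; apply Rmult_lt_0_compat; lra. }
  assert (0 < 1 - cos_AFB ^ 2) by nra.
  split; nra.
Qed.

Let bisector_half_angle_pos : 0 < sin (angle B F A / 2) /\ 0 < cos (angle B F A / 2).
Proof. exact (half_acos_pos cos_AFB cos_AFB_range). Qed.

Let rArB_add_dot : rA * rB + dot_BA = (qA - qB) * (qA * x + dot d d) / qA.
Proof.
  destruct bisector_feet_sign.
  rewrite rB_eq.
  replace (rA * (- qB * rA / qA)) with (- qB * rA ^ 2 / qA) by (field; lra).
  rewrite rA_sq, dd_eq. unfold dot_BA. field. lra.
Qed.

Let bisector_half_cot : K = (qA * x + dot d d) / (qA * y).
Proof.
  destruct bisector_feet_sign.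
  unfold K. change (angle B F A) with (acos cos_AFB).
  rewrite cot_half_acos by exact cos_AFB_range.
  rewrite bisector_sin_sq, sqrt_pow2.
  2: { apply Rlt_le, Rdiv_lt_0_compat; apply Rmult_lt_0_compat; lra. }
  rewrite cos_AFB_eq.
  transitivity ((rA * rB + dot_BA) / (y * (qA - qB))); [field; repeat split; lra |].
  rewrite rArB_add_dot. field. lra.
Qed.

Let bisector_cot_ratio : x / y = (qA + qB) * K / (qA - qB).
Proof.
  destruct bisector_feet_sign. pose proof bisector_sq_relation.
  rewrite bisector_half_cot.
  replace (x / y) with (x * qA * (qA - qB) / (qA * y * (qA - qB))) by (field; lra).
  replace ((qA + qB) * ((qA * x + dot d d) / (qA * y)) / (qA - qB))
    with ((qA + qB) * (qA * x + dot d d) / (qA * y * (qA - qB))) by (field; lra).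
  f_equal. lra.
Qed.

Let bisector_cot_foot : K * (- qB * y) = qB * x + dot d d.
Proof.
  destruct bisector_feet_sign. pose proof bisector_sq_relation.
  rewrite bisector_half_cot.
  apply (Rmult_eq_reg_l qA); [| lra].
  transitivity (- qB * (qA * x + dot d d)); [field; lra | lra].
Qed.

Let bisector_cos_angle : 2 + 2 * cos (angle B F A) = (1 / rA + 1 / rB) ^ 2 * dot d d.
Proof.
  destruct bisector_feet_sign. pose proof bisector_sq_relation.
  change (angle B F A) with (acos cos_AFB).
  rewrite cos_acos by (pose proof cos_AFB_range; lra).
  rewrite cos_AFB_eq.
  transitivity (2 * (rA * rB + dot_BA) / (rA * rB)); [field; lra |].
  rewrite rArB_add_dot, rB_eq.
  replace (2 * ((qA - qB) * (qA * x + dot d d) / qA) / (rA * (- qB * rA / qA)))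
    with (- 2 * qB * (qA - qB) * (qA * x + dot d d) / (qB ^ 2 * rA ^ 2)) by (field; lra).
  replace ((1 / rA + 1 / (- qB * rA / qA)) ^ 2 * dot d d)
    with ((qA - qB) ^ 2 * dot d d / (qB ^ 2 * rA ^ 2)) by (field; lra).
  f_equal. nra.
Qed.

Lemma bisector_triangle :
  (qB < 0 < qA) /\ (0 < sin (angle B F A / 2) /\ 0 < cos (angle B F A / 2)) /\
  x / y = (qA + qB) * K / (qA - qB) /\
  K * (- qB * y) = qB * x + dot d d /\
  2 + 2 * cos (angle B F A) = (1 / rA + 1 / rB) ^ 2 * dot d d.
Proof.
  exact (conj bisector_feet_sign (conj bisector_half_angle_pos
           (conj bisector_cot_ratio (conj bisector_cot_foot bisector_cos_angle)))).
Qed.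

End AngleBisector.

Section SimpsonConfiguration.

Variables (A1'' A2 A3 A4'' : pt) (s1 s2 tau1 tau2 l : R).

Let A1 := lerp A1'' A2 s1.
Let A4 := lerp A4'' A3 s2.
Let T12 := lerp A1'' A2 tau1.
Let T34 := lerp A4'' A3 tau2.
Let F := lerp T12 T34 l.

Hypothesis s1_range : 0 < s1 < 1.
Hypothesis s2_range : 0 < s2 < 1.
Hypothesis nondeg : nondegenerate_tetra A1 A2 A3 A4.
Hypothesis FT : is_FT_point A1 A2 A3 A4 F.
Hypothesis interior : in_tetra_interior A1 A2 A3 A4 F.
Hypothesis perp12 : dot (vsub A4'' A1'') (vsub A2 A1) = 0.
Hypothesis perp34 : dot (vsub A4'' A1'') (vsub A4 A3) = 0.

Let U := vsub A2 A1''.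
Let V := vsub A3 A4''.
Let N := vsub A4'' A1''.
Let D := vsub T34 T12.
Let L1 := vnorm U.
Let L2 := vnorm V.
Let height := vnorm N.
Let c := dot U V / (L1 * L2).

Let N_U : dot N U = 0.
Proof.
  assert (E : dot (vsub A4'' A1'') (vsub A2 A1) = (1 - s1) * dot N U)
    by (unfold N, A1, U; vec_unfold; ring).
  rewrite perp12 in E. symmetry in E.
  apply Rmult_integral in E; destruct E; [lra | assumption].
Qed.

Let N_V : dot N V = 0.
Proof.
  assert (E : dot (vsub A4'' A1'') (vsub A4 A3) = (s2 - 1) * dot N V)
    by (unfold N, A4, V; vec_unfold; ring).
  rewrite perp34 in E. symmetry in E.
  apply Rmult_integral in E; destruct E; [lra | assumption].
Qed.

Let det_UVN : det3 U V N <> 0.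
Proof.
  intros Hz. apply nondeg.
  transitivity ((1 - s1) * (1 - s2) * det3 U V N); [unfold A1, A4, U, V, N; vec_unfold; ring |].
  rewrite Hz; ring.
Qed.

Let gram_pos : 0 < dot N N /\ 0 < dot U U /\ 0 < dot V V /\ dot U V ^ 2 < dot U U * dot V V.
Proof.
  pose proof (det3_sq_perp U V N N_U N_V) as Hg.
  assert (Hd : 0 < det3 U V N ^ 2) by (apply pow2_gt_0; exact det_UVN).
  pose proof (dot_nonneg N); pose proof (dot_nonneg U); pose proof (dot_nonneg V).
  pose proof (pow2_ge_0 (dot U V)).
  assert (HN : 0 < dot N N).
  { destruct (Rle_lt_or_eq_dec _ _ (dot_nonneg N)) as [| E]; [assumption |].
    rewrite <- E in Hg. lra. }
  assert (HUV : dot U V ^ 2 < dot U U * dot V V) by nra.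
  assert (HU : 0 < dot U U) by nra.
  assert (HV : 0 < dot V V) by nra.
  auto.
Qed.

Let L1_pos : 0 < L1.
Proof. apply sqrt_lt_R0. apply gram_pos. Qed.
Let L2_pos : 0 < L2.
Proof. apply sqrt_lt_R0. apply gram_pos. Qed.
Let height_pos : 0 < height.
Proof. apply sqrt_lt_R0. apply gram_pos. Qed.

Let dot_UU : dot U U = L1 ^ 2 := eq_sym (vnorm_sq U).
Let dot_VV : dot V V = L2 ^ 2 := eq_sym (vnorm_sq V).
Let dot_NN : dot N N = height ^ 2 := eq_sym (vnorm_sq N).
Let dot_UV : dot U V = c * L1 * L2.
Proof. unfold c. field. lra. Qed.

Let c_sq_lt1 : c ^ 2 < 1.
Proof.
  destruct gram_pos as (_ & _ & _ & Hcs).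
  rewrite dot_UV, dot_UU, dot_VV in Hcs.
  assert (0 < (L1 * L2) ^ 2) by (apply pow2_gt_0; nra).
  nra.
Qed.

Let t12 := tau1 * L1.
Let t34 := tau2 * L2.
Let DD := height ^ 2 + t12 ^ 2 + t34 ^ 2 - 2 * t12 * t34 * c.

Let dot_DU : dot D U = (t34 * c - t12) * L1.
Proof.
  transitivity (dot N U + tau2 * dot U V - tau1 * dot U U);
    [unfold D, T34, T12, U, V, N; vec_unfold; ring |].
  rewrite N_U, dot_UV, dot_UU. unfold t12, t34. ring.
Qed.

Let dot_DV : dot D V = (t34 - t12 * c) * L2.
Proof.
  transitivity (dot N V + tau2 * dot V V - tau1 * dot U V);
    [unfold D, T34, T12, U, V, N; vec_unfold; ring |].
  rewrite N_V, dot_UV, dot_VV. unfold t12, t34. ring.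
Qed.

Let dot_DD : dot D D = DD.
Proof.
  transitivity (dot N N + tau2 ^ 2 * dot V V + tau1 ^ 2 * dot U U
                + 2 * tau2 * dot N V - 2 * tau1 * dot N U - 2 * tau1 * tau2 * dot U V);
    [unfold D, T34, T12, U, V, N; vec_unfold; ring |].
  rewrite N_U, N_V, dot_NN, dot_UV, dot_UU, dot_VV. unfold DD, t12, t34. ring.
Qed.

Let r1 := edist A1 F.
Let r2 := edist A2 F.
Let r3 := edist A3 F.
Let r4 := edist A4 F.

Let A1_F : vsub A1 F = vadd (vscale (s1 - tau1) U) (vscale (- l) D).
Proof. unfold A1, F, D, T12, T34, U; vec_field. Qed.
Let A2_F : vsub A2 F = vadd (vscale (1 - tau1) U) (vscale (- l) D).
Proof. unfold F, D, T12, T34, U; vec_field. Qed.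
Let A3_F : vsub A3 F = vadd (vscale (1 - tau2) V) (vscale (1 - l) D).
Proof. unfold F, D, T12, T34, V; vec_field. Qed.
Let A4_F : vsub A4 F = vadd (vscale (s2 - tau2) V) (vscale (1 - l) D).
Proof. unfold A4, F, D, T12, T34, V; vec_field. Qed.

Let vertices_ne_F : A1 <> F /\ A2 <> F /\ A3 <> F /\ A4 <> F :=
  interior_vertex_ne A1 A2 A3 A4 F nondeg interior.

Let r_pos : 0 < r1 /\ 0 < r2 /\ 0 < r3 /\ 0 < r4.
Proof.
  destruct vertices_ne_F as (n1 & n2 & n3 & n4).
  repeat split; apply edist_pos; assumption.
Qed.

(* Stationarity of F, read off in the independent directions U, V and D = T34 - T12. *)
Let balance :
  (s1 - tau1) / r1 + (1 - tau1) / r2 = 0 /\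
  (1 - tau2) / r3 + (s2 - tau2) / r4 = 0 /\
  (1 - l) * (1 / r3 + 1 / r4) - l * (1 / r1 + 1 / r2) = 0.
Proof.
  destruct vertices_ne_F as (n1 & n2 & n3 & n4).
  destruct r_pos as (p1 & p2 & p3 & p4).
  apply det3_indep with (u := U) (v := V) (w := D).
  { replace (det3 U V D) with (det3 U V N) by (unfold D, T34, T12, U, V, N; vec_unfold; ring).
    exact det_UVN. }
  intros e.
  rewrite <- (FT_point_balance A1 A2 A3 A4 F e FT n1 n2 n3 n4).
  fold r1 r2 r3 r4. rewrite A1_F, A2_F, A3_F, A4_F.
  vec_unfold. field. lra.
Qed.

Let l_range : 0 < l < 1.
Proof.
  destruct r_pos as (p1 & p2 & p3 & p4). destruct balance as (_ & _ & Hw).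
  assert (0 < 1 / r1 + 1 / r2) by (apply Rplus_lt_0_compat; apply Rdiv_lt_0_compat; lra).
  assert (0 < 1 / r3 + 1 / r4) by (apply Rplus_lt_0_compat; apply Rdiv_lt_0_compat; lra).
  split; nra.
Qed.

Let T34_F : vsub T34 F = vscale (1 - l) D.
Proof. unfold F, D; vec_field. Qed.
Let T12_F : vsub T12 F = vscale (- l) D.
Proof. unfold F, D; vec_field. Qed.

Let e12 := vscale (/ L1) U.
Let e34 := vscale (/ L2) V.
(* S12 is the distance from T12 to the line A3A4, so F is at distance (1 - l) S12 from it;
   symmetrically for S34. *)
Let S12 := sqrt (height ^ 2 + t12 ^ 2 * (1 - c ^ 2)).
Let S34 := sqrt (height ^ 2 + t34 ^ 2 * (1 - c ^ 2)).

Let S12_sq : S12 ^ 2 = height ^ 2 + t12 ^ 2 * (1 - c ^ 2).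
Proof. apply pow2_sqrt. pose proof (pow2_ge_0 t12). nra. Qed.
Let S34_sq : S34 ^ 2 = height ^ 2 + t34 ^ 2 * (1 - c ^ 2).
Proof. apply pow2_sqrt. pose proof (pow2_ge_0 t34). nra. Qed.
Let S12_pos : 0 < S12.
Proof. apply sqrt_lt_R0. pose proof (pow2_ge_0 t12). nra. Qed.
Let S34_pos : 0 < S34.
Proof. apply sqrt_lt_R0. pose proof (pow2_ge_0 t34). nra. Qed.

Let e12_unit : dot e12 e12 = 1.
Proof.
  transitivity (dot U U / L1 ^ 2); [unfold e12; vec_unfold; field; lra |].
  rewrite dot_UU. field. lra.
Qed.
Let e34_unit : dot e34 e34 = 1.
Proof.
  transitivity (dot V V / L2 ^ 2); [unfold e34; vec_unfold; field; lra |].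
  rewrite dot_VV. field. lra.
Qed.

Let x12_eq : dot (vsub T12 F) e12 = l * (t12 - t34 * c).
Proof.
  rewrite T12_F. transitivity (- l * dot D U / L1); [unfold e12; vec_unfold; field; lra |].
  rewrite dot_DU. field. lra.
Qed.
Let x34_eq : dot (vsub T34 F) e34 = (1 - l) * (t34 - t12 * c).
Proof.
  rewrite T34_F. transitivity ((1 - l) * dot D V / L2); [unfold e34; vec_unfold; field; lra |].
  rewrite dot_DV. field. lra.
Qed.

Let d12_sq : dot (vsub T12 F) (vsub T12 F) = l ^ 2 * DD.
Proof. rewrite T12_F, <- dot_DD. vec_unfold. ring. Qed.
Let d34_sq : dot (vsub T34 F) (vsub T34 F) = (1 - l) ^ 2 * DD.
Proof. rewrite T34_F, <- dot_DD. vec_unfold. ring. Qed.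

Let theta := angle A4 F A3.
Let K := cos (theta / 2) / sin (theta / 2).
Let theta12 := angle A1 F A2.
Let K12 := cos (theta12 / 2) / sin (theta12 / 2).

Let triangle34 :
  s2 < tau2 < 1 /\ (0 < sin (theta / 2) /\ 0 < cos (theta / 2)) /\
  (t34 - t12 * c) / S12 = (1 + s2 - 2 * tau2) * K / (1 - s2) /\
  K * ((t34 - s2 * L2) * S12) = (s2 * L2 - t34) * (t34 - t12 * c) + (1 - l) * DD /\
  2 + 2 * cos theta = (1 / r3 + 1 / r4) ^ 2 * ((1 - l) ^ 2 * DD).
Proof.
  destruct l_range, balance as (_ & B34 & _), r_pos as (_ & _ & p3 & p4).
  destruct (bisector_triangle F T34 A3 A4 e34
              ((1 - tau2) * L2) ((s2 - tau2) * L2) ((1 - l) * S12))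
    as ((Hq & Hq') & Hhalf & Hratio & Hfoot & Hcos).
  - exact e34_unit.
  - unfold T34, e34, V. apply pt_ext; vec_unfold; field; lra.
  - unfold T34, A4, e34, V. apply pt_ext; vec_unfold; field; lra.
  - nra.
  - apply Rmult_lt_0_compat; lra.
  - rewrite d34_sq, x34_eq. rewrite Rpow_mult_distr, S12_sq. unfold DD. ring.
  - transitivity (L2 * ((1 - tau2) / r3 + (s2 - tau2) / r4));
      [unfold r3, r4 in *; field; lra |].
    rewrite B34. ring.
  - rewrite x34_eq, d34_sq in *.
    change (cos (angle A4 F A3 / 2) / sin (angle A4 F A3 / 2)) with K in Hratio, Hfoot.
    refine (conj (conj _ _) (conj Hhalf (conj _ (conj _ Hcos)))); [nra | nra | |].
    + transitivity ((1 - l) * (t34 - t12 * c) / ((1 - l) * S12)); [field; lra |].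
      rewrite Hratio. field. lra.
    + apply (Rmult_eq_reg_l (1 - l)); [| lra].
      transitivity (K * (- ((s2 - tau2) * L2) * ((1 - l) * S12))); [unfold t34; ring |].
      rewrite Hfoot. unfold t34. ring.
Qed.

Let triangle12 :
  s1 < tau1 < 1 /\
  (t12 - t34 * c) / S34 = (1 + s1 - 2 * tau1) * K12 / (1 - s1) /\
  K12 * ((t12 - s1 * L1) * S34) = (s1 * L1 - t12) * (t12 - t34 * c) + l * DD /\
  2 + 2 * cos theta12 = (1 / r2 + 1 / r1) ^ 2 * (l ^ 2 * DD).
Proof.
  destruct l_range, balance as (B12 & _ & _), r_pos as (p1 & p2 & _ & _).
  destruct (bisector_triangle F T12 A2 A1 e12
              ((1 - tau1) * L1) ((s1 - tau1) * L1) (l * S34))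
    as ((Hq & Hq') & _ & Hratio & Hfoot & Hcos).
  - exact e12_unit.
  - unfold T12, e12, U. apply pt_ext; vec_unfold; field; lra.
  - unfold T12, A1, e12, U. apply pt_ext; vec_unfold; field; lra.
  - nra.
  - apply Rmult_lt_0_compat; lra.
  - rewrite d12_sq, x12_eq. rewrite Rpow_mult_distr, S34_sq. unfold DD. ring.
  - transitivity (L1 * ((s1 - tau1) / r1 + (1 - tau1) / r2));
      [unfold r1, r2 in *; field; lra |].
    rewrite B12. ring.
  - rewrite x12_eq, d12_sq in *.
    change (cos (angle A1 F A2 / 2) / sin (angle A1 F A2 / 2)) with K12 in Hratio, Hfoot.
    refine (conj (conj _ _) (conj _ (conj _ Hcos))); [nra | nra | |].
    + transitivity (l * (t12 - t34 * c) / (l * S34)); [field; lra |].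
      rewrite Hratio. field. lra.
    + apply (Rmult_eq_reg_l l); [| lra].
      transitivity (K12 * (- ((s1 - tau1) * L1) * (l * S34))); [unfold t12; ring |].
      rewrite Hfoot. unfold t12. ring.
Qed.

Let equal_angles : theta12 = theta.
Proof.
  destruct triangle12 as (_ & _ & _ & C12), triangle34 as (_ & _ & _ & _ & C34).
  destruct balance as (_ & _ & Hw).
  apply cos_inj; [apply acos_bound | apply acos_bound |].
  assert (E : (1 / r2 + 1 / r1) ^ 2 * (l ^ 2 * DD) = (1 / r3 + 1 / r4) ^ 2 * ((1 - l) ^ 2 * DD)).
  { replace ((1 - l) * (1 / r3 + 1 / r4)) with (l * (1 / r1 + 1 / r2)) in Hw by lra.
    transitivity ((l * (1 / r1 + 1 / r2)) ^ 2 * DD); [ring |].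
    replace (l * (1 / r1 + 1 / r2)) with ((1 - l) * (1 / r3 + 1 / r4)) by lra. ring. }
  lra.
Qed.

Let simpson_ratio34 :
  (t34 - t12 * c) / S12 = ((1 + s2) / 2 * L2 - t34) / ((1 - s2) * L2 / 2 * tan (theta / 2)).
Proof.
  destruct triangle34 as (_ & (Hs & Hc) & Hratio & _).
  rewrite Hratio. unfold K, tan, t34. field. repeat split; lra.
Qed.

Let simpson_ratio12 :
  (t12 - t34 * c) / S34 = ((1 + s1) / 2 * L1 - t12) / ((1 - s1) * L1 / 2 * tan (theta / 2)).
Proof.
  destruct triangle34 as (_ & (Hs & Hc) & _).
  destruct triangle12 as (_ & Hratio & _).
  rewrite Hratio. unfold K12. rewrite equal_angles. unfold tan, t12. field. repeat split; lra.
Qed.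

Let simpson_cot :
  cos (theta / 2) / sin (theta / 2)
  = (height ^ 2 + s1 * L1 * (t12 - t34 * c) + s2 * L2 * (t34 - t12 * c))
    / ((t12 - s1 * L1) * S34 + (t34 - s2 * L2) * S12).
Proof.
  destruct triangle34 as ((H2 & _) & _ & _ & F34 & _).
  destruct triangle12 as ((H1 & _) & _ & F12 & _).
  unfold K12 in F12. rewrite equal_angles in F12. fold K in F12 |- *.
  assert (Hden : 0 < (t12 - s1 * L1) * S34 + (t34 - s2 * L2) * S12).
  { unfold t12, t34. apply Rplus_lt_0_compat; apply Rmult_lt_0_compat; nra. }
  apply (Rmult_eq_reg_r ((t12 - s1 * L1) * S34 + (t34 - s2 * L2) * S12)); [| lra].
  rewrite Rmult_plus_distr_l, F12, F34. unfold DD. field. lra.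
Qed.

Let c_range : -1 <= c <= 1.
Proof. pose proof c_sq_lt1. split; nra. Qed.

Let phi_eq : vangle (vsub A2 A1) (vsub A3 A4) = acos c.
Proof.
  replace (vsub A2 A1) with (vscale (1 - s1) U) by (unfold A1, U; vec_field).
  replace (vsub A3 A4) with (vscale (1 - s2) V) by (unfold A4, V; vec_field).
  rewrite vangle_scale; [reflexivity | lra | lra | exact L1_pos | exact L2_pos].
Qed.

Let edist_on_line12 (a : R) : 0 <= a -> edist A1'' (lerp A1'' A2 a) = a * L1.
Proof. intros Ha. rewrite edist_lerp_l, Rabs_pos_eq by exact Ha. reflexivity. Qed.

Let edist_on_line34 (a : R) : 0 <= a -> edist A4'' (lerp A4'' A3 a) = a * L2.
Proof. intros Ha. rewrite edist_lerp_l, Rabs_pos_eq by exact Ha. reflexivity. Qed.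

Lemma simpson_line_identities :
  let H := edist A1'' A4'' in
  let phi := vangle (vsub A2 A1) (vsub A3 A4) in
  let a12 := edist A1 A2 in
  let a34 := edist A3 A4 in
  let t12 := edist A1'' T12 in
  let t34 := edist A4'' T34 in
  let k1 := edist A1'' A1 in
  let k2 := edist A4'' A4 in
  let m12 := edist A1'' (midpoint A1 A2) in
  let m34 := edist A4'' (midpoint A3 A4) in
  let theta := angle A4 F A3 in
  (t34 - t12 * cos phi) / sqrt (H ^ 2 + t12 ^ 2 * sin phi ^ 2)
    = (m34 - t34) / (a34 / 2 * tan (theta / 2)) /\
  (t12 - t34 * cos phi) / sqrt (H ^ 2 + t34 ^ 2 * sin phi ^ 2)
    = (m12 - t12) / (a12 / 2 * tan (theta / 2)) /\
  cos (theta / 2) / sin (theta / 2)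
    = (H ^ 2 + k1 * (t12 - t34 * cos phi) + k2 * (t34 - t12 * cos phi))
      / ((t12 - k1) * sqrt (H ^ 2 + t34 ^ 2 * sin phi ^ 2)
         + (t34 - k2) * sqrt (H ^ 2 + t12 ^ 2 * sin phi ^ 2)).
Proof.
  destruct triangle12 as ((tau1_gt & _) & _), triangle34 as ((tau2_gt & _) & _).
  cbv zeta.
  rewrite phi_eq, cos_acos, sin_acos_sq by exact c_range.
  rewrite (edist_sym A1'' A4''), (edist_sym A3 A4).
  unfold T12, T34, A1, A4.
  rewrite midpoint_lerp_r, midpoint_lerp_l, !edist_lerp_r, !Rabs_pos_eq by lra.
  rewrite !edist_on_line12, !edist_on_line34 by lra.
  exact (conj simpson_ratio34 (conj simpson_ratio12 simpson_cot)).
Qed.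

End SimpsonConfiguration.

Theorem theorem5 (A1 A2 A3 A4 F T12 T34 A1'' A4'' : pt) :
  nondegenerate_tetra A1 A2 A3 A4 ->
  edist A1 A4 + edist A2 A3 > edist A1 A2 + edist A3 A4 ->
  is_FT_point A1 A2 A3 A4 F ->
  in_tetra_interior A1 A2 A3 A4 F ->
  (* Simpson line: T12 on line A1A2, T34 on line A3A4, F on line T12T34 *)
  on_line T12 A1 A2 -> on_line T34 A3 A4 -> on_line F T12 T34 ->
  (* common perpendicular A1''A4'' of lines A1A2 and A3A4 *)
  on_line A1'' A1 A2 -> on_line A4'' A3 A4 ->
  dot (vsub A4'' A1'') (vsub A2 A1) = 0 ->
  dot (vsub A4'' A1'') (vsub A4 A3) = 0 ->
  (* A1'' outside [A1,A2] with A1 between A1'' and A2; likewise for A4'' *)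
  strictly_between A1'' A1 A2 ->
  strictly_between A4'' A4 A3 ->
  let H := edist A1'' A4'' in
  let phi := vangle (vsub A2 A1) (vsub A3 A4) in
  let a12 := edist A1 A2 in
  let a34 := edist A3 A4 in
  let t12 := edist A1'' T12 in
  let t34 := edist A4'' T34 in
  let k1 := edist A1'' A1 in
  let k2 := edist A4'' A4 in
  let m12 := edist A1'' (midpoint A1 A2) in
  let m34 := edist A4'' (midpoint A3 A4) in
  let theta := angle A4 F A3 in
  (t34 - t12 * cos phi) / sqrt (H ^ 2 + t12 ^ 2 * sin phi ^ 2)
    = (m34 - t34) / (a34 / 2 * tan (theta / 2)) /\
  (t12 - t34 * cos phi) / sqrt (H ^ 2 + t34 ^ 2 * sin phi ^ 2)
    = (m12 - t12) / (a12 / 2 * tan (theta / 2)) /\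
  cos (theta / 2) / sin (theta / 2)
    = (H ^ 2 + k1 * (t12 - t34 * cos phi) + k2 * (t34 - t12 * cos phi))
      / ((t12 - k1) * sqrt (H ^ 2 + t34 ^ 2 * sin phi ^ 2)
         + (t34 - k2) * sqrt (H ^ 2 + t12 ^ 2 * sin phi ^ 2)).
Proof.
  intros Hnd _ HFT Hint [sg ->] [rh ->] [l ->] _ _ Hperp12 Hperp34 [s1 [Hs1 ->]] [s2 [Hs2 ->]].
  rewrite lerp_lerp_r, lerp_l_lerp in *.
  now apply simpson_line_identities.
Qed.
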